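(* Let $n,m\in\mathbb{Z}$ be such that $k:=\gcd(n,m)$ satisfies $|k|\ge2$. Then the group $\langle a,b\mid (ab)^n=(ba)^m\rangle$ is big.
   Context: A group is called big if it contains a non-abelian free subgroup. *)

(* Finitely presented groups are modelled concretely:
   the group < a, b | r > is the set of words in the letters a^{+-1}, b^{+-1}
   modulo the congruence generated by free cancellation and the relator r. *)
From mathcomp Require Import all_boot all_order all_algebra.
From Stdlib Require Lists.List.
Set Implicit Arguments. Unset Strict Implicit. Unset Printing Implicit Defensive.
Import Order.TTheory GRing.Theory Num.Theory.

(* A letter over an alphabet I: (generator, inverted?) ; true = inverse. *)
Definition letter (I : Type) := (I * bool)%type.
Definition word (I : Type) := seq (letter I).

Definition linv (I : Type) (l : letter I) : letter I := (l.1, ~~ l.2).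
Definition winv (I : Type) (w : word I) : word I := rev (map (@linv I) w).

Definition wpow (I : Type) (w : word I) (z : int) : word I :=
  match z with
  | Posz k => flatten (nseq k w)
  | Negz k => flatten (nseq k.+1 (winv w))
  end.

Inductive pres_eq (I : Type) (rels : seq (word I)) : word I -> word I -> Prop :=
| pe_refl w : pres_eq rels w w
| pe_sym u v : pres_eq rels u v -> pres_eq rels v u
| pe_trans u v w : pres_eq rels u v -> pres_eq rels v w -> pres_eq rels u w
| pe_cancel u v (l : letter I) : pres_eq rels (u ++ [:: l; linv l] ++ v) (u ++ v)
| pe_rel u v r : Stdlib.Lists.List.In r rels -> pres_eq rels (u ++ r ++ v) (u ++ v).

Fixpoint reduced (J : Type) (w : word J) : Prop :=
  match w with
  | x :: ((y :: _) as t) => ~ (x.1 = y.1 /\ x.2 = ~~ y.2) /\ reduced t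
  | _ => True
  end.

Definition wsubst (I J : Type) (x : J -> word I) (w : word J) : word I :=
  flatten (map (fun l : letter J => if l.2 then winv (x l.1) else x l.1) w).

Definition free_family (I J : Type) (rels : seq (word I)) (x : J -> word I) : Prop :=
  forall w : word J, w <> [::] -> reduced w -> ~ pres_eq rels (wsubst x w) [::].

(* The group <I | rels> is big: it contains a non-abelian free subgroup,
   i.e. a subgroup free on a basis with at least two elements. *)
Definition big_presented (I : Type) (rels : seq (word I)) : Prop :=
  exists (J : Type) (x : J -> word I) (j1 j2 : J),
    j1 <> j2 /\ free_family rels x.

(* Generators a (= false) and b (= true) and the relator (ab)^n (ba)^{-m}. *)
Definition ga : letter bool := (false, false).
Definition gb : letter bool := (true, false).
Definition relator_nm (n m : int) : word bool :=
  wpow [:: ga; gb] n ++ winv (wpow [:: gb; ga] m).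

From mathcomp Require Import all_boot all_order all_algebra.
From mathcomp Require Import zify.
Set Implicit Arguments. Unset Strict Implicit. Unset Printing Implicit Defensive.
Import Order.TTheory GRing.Theory Num.Theory.
Local Open Scope ring_scope.

(** Let k = gcd(n, m). The assignment a |-> A, b |-> A^-1 C defines a morphism
   onto the free product H = <A> * <C | C^k> of Z and Z/k: it sends ab to C
   and ba to A^-1 C A, so both (ab)^n and (ba)^m die since k divides n and m.
   The images A and C A C^-1 of a and of a b a b^-1 a^-1 play ping-pong on
   the normal forms of H: a reduced word in them whose first letter is
   A^(+-1), resp. (C A C^-1)^(+-1), yields a normal form beginning with
   A^(+-1), resp. C A^(+-1). Hence no nontrivial reduced word maps to 1.
   The morphism is realised as the action of words on normal forms. *)

Section FreeProductZZk.

Variable k : nat.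
Hypothesis k_gt1 : (1 < k)%N.

(** Syllables are pairs (b, i) standing for A^i if b = false and C^i if
   b = true; exponents of C are kept in [0, k). *)
Definition normexp (b : bool) (i : int) : int := if b then (i %% k%:Z)%Z else i.

Lemma normexpDl b x y : normexp b (normexp b x + y) = normexp b (x + y).
Proof. by case: b => //=; rewrite modzDml. Qed.

Lemma normexp_id b x : normexp b (normexp b x) = normexp b x.
Proof. by have := normexpDl b x 0; rewrite !addr0. Qed.

Lemma normexp0 b : normexp b 0 = 0.
Proof. by case: b => //=; rewrite mod0z. Qed.

Definition nform := seq (bool * int).

Definition head_gen (s : nform) : option bool :=
  if s is (b, _) :: _ then Some b else None.

Fixpoint nform_wf (s : nform) : bool :=
  if s is (b, i) :: r then
    [&& normexp b i == i, i != 0, nform_wf r & head_gen r != Some b]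
  else true.

Definition cons_syl (b : bool) (e : int) (s : nform) : nform :=
  if normexp b e == 0 then s else (b, normexp b e) :: s.

Definition mul_syl (b : bool) (e : int) (s : nform) : nform :=
  if s is (b', i) :: r then
    if b' == b then cons_syl b (i + e) r else cons_syl b e s
  else cons_syl b e s.

Local Notation mulA := (mul_syl false).
Local Notation mulC := (mul_syl true).

Lemma mul_syl_cons b e s : head_gen s != Some b -> mul_syl b e s = cons_syl b e s.
Proof. by case: s => [|[b' i] r] //= /eqP hb; case: eqP => // eb; case: hb; rewrite eb. Qed.

Lemma nform_wf_cons b e s :
  nform_wf s -> head_gen s != Some b -> nform_wf (cons_syl b e s).
Proof.
by rewrite /cons_syl => ws hs; case: eqP => //= /eqP e0; rewrite normexp_id eqxx e0 ws hs.
Qed.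

Lemma nform_wf_mul b e s : nform_wf s -> nform_wf (mul_syl b e s).
Proof.
case: s => [|[b' i] r] /=; first by move=> _; apply: nform_wf_cons.
case/and4P=> ni i0 wr hr; case: eqP => [<-|nb]; first exact: nform_wf_cons.
by apply: nform_wf_cons => /=; [rewrite ni i0 wr hr | apply/eqP => -[]].
Qed.

Lemma mul_sylA b e e' s :
  nform_wf s -> mul_syl b e (mul_syl b e' s) = mul_syl b (e' + e) s.
Proof.
have mul_cons f t : head_gen t != Some b ->
    mul_syl b e (cons_syl b f t) = cons_syl b (f + e) t.
  move=> ht; rewrite /cons_syl; case: eqP => [f0|_].
    by rewrite mul_syl_cons // /cons_syl -(normexpDl b f e) f0 add0r.
  by rewrite /= eqxx /cons_syl normexpDl.
case: s => [|[b' i] r] /=; first by move=> _; apply: mul_cons.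
case/and4P=> _ _ _ hr; case: eqP => [eb|nb].
  by subst b'; rewrite mul_cons // addrA.
by apply: mul_cons => /=; apply/eqP => -[].
Qed.

Lemma mul_syl_id b e s : nform_wf s -> normexp b e = 0 -> mul_syl b e s = s.
Proof.
move=> ws e0; have shift x : normexp b (x + e) = normexp b x.
  by rewrite addrC -normexpDl e0 add0r.
case: s ws => [|[b' i] r] /=; first by rewrite /cons_syl e0 eqxx.
case/and4P=> ni i0 _ _; case: eqP => [eb|_]; last by rewrite /cons_syl e0 eqxx.
by subst b'; rewrite /cons_syl shift (eqP ni) (negbTE i0).
Qed.

Lemma mul_sylK b e s : nform_wf s -> mul_syl b e (mul_syl b (- e) s) = s.
Proof. by move=> ws; rewrite mul_sylA // addNr mul_syl_id // normexp0. Qed.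

Lemma mul_sylNK b e s : nform_wf s -> mul_syl b (- e) (mul_syl b e s) = s.
Proof. by move=> ws; rewrite mul_sylA // addrN mul_syl_id // normexp0. Qed.

Definition act_letter (l : letter bool) (s : nform) : nform :=
  match l with
  | (false, false) => mulA 1 s
  | (false, true) => mulA (-1) s
  | (true, false) => mulA (-1) (mulC 1 s)
  | (true, true) => mulC (-1) (mulA 1 s)
  end.

Definition act_word (w : word bool) (s : nform) : nform := foldr act_letter s w.

Lemma act_word_cat u v s : act_word (u ++ v) s = act_word u (act_word v s).
Proof. exact: foldr_cat. Qed.

Lemma nform_wf_act w s : nform_wf s -> nform_wf (act_word w s).
Proof. by elim: w => //= -[[] []] w IH /IH ws /=; rewrite ?nform_wf_mul. Qed.

Lemma act_letterK l s : nform_wf s -> act_letter l (act_letter (linv l) s) = s.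
Proof.
move=> ws; case: l => [[] []] /=.
- by rewrite (mul_sylK false 1) ?nform_wf_mul // (mul_sylNK true 1).
- by rewrite (mul_sylK true 1) ?nform_wf_mul // (mul_sylNK false 1).
- exact: (mul_sylNK false 1).
- exact: (mul_sylK false 1).
Qed.

Lemma act_winvK w s : nform_wf s -> act_word (winv w) (act_word w s) = s.
Proof.
elim: w s => // l w IH s ws.
have -> : winv (l :: w) = winv w ++ [:: linv l] by rewrite /winv /= rev_cons -cats1.
have linvK : linv (linv l) = l by case: l => ? ?; rewrite /linv /= negbK.
have := act_letterK (linv l) (nform_wf_act w ws); rewrite linvK act_word_cat /= => ->.
exact: IH.
Qed.

Lemma act_word_iter q w s : act_word (flatten (nseq q w)) s = iter q (act_word w) s.
Proof. by elim: q => //= q IH; rewrite act_word_cat IH. Qed.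

Lemma iter_act_syl w b e q s :
    (forall t, nform_wf t -> act_word w t = mul_syl b e t) -> nform_wf s ->
  iter q (act_word w) s = mul_syl b (e * q%:Z) s.
Proof.
move=> hw ws; elim: q => [|q IH] /=; first by rewrite mulr0 mul_syl_id ?normexp0.
by rewrite IH hw ?nform_wf_mul // mul_sylA // intS mulrDr mulr1 addrC.
Qed.

Lemma iter_act_conjA w w' q s :
    (forall t, nform_wf t -> act_word w' t = mulA (-1) (act_word w (mulA 1 t))) ->
    nform_wf s ->
  iter q (act_word w') s = mulA (-1) (iter q (act_word w) (mulA 1 s)).
Proof.
move=> hw ws; elim: q => [|q IH] /=; first by rewrite (mul_sylNK false 1).
have wi : nform_wf (iter q (act_word w) (mulA 1 s)).
  by elim: (q) => [|q' IH'] /=; rewrite ?nform_wf_act ?nform_wf_mul.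
by rewrite IH hw ?nform_wf_mul // (mul_sylK false 1).
Qed.

Lemma act_pow_ab n s : nform_wf s -> act_word (wpow [:: ga; gb] n) s = mulC n s.
Proof.
move=> ws; case: n => p; rewrite /wpow act_word_iter.
  rewrite (iter_act_syl (b:=true) (e:=1)) ?mul1r // => t wt /=.
  by rewrite (mul_sylK false 1) ?nform_wf_mul.
rewrite (iter_act_syl (b:=true) (e:=-1)) ?NegzE ?mulN1r // => t wt /=.
by rewrite (mul_sylK false 1).
Qed.

(** ba = a^-1 (ab) a. *)
Lemma act_pow_ba m s :
  nform_wf s -> act_word (wpow [:: gb; ga] m) s = mulA (-1) (mulC m (mulA 1 s)).
Proof.
move=> ws; rewrite -act_pow_ab ?nform_wf_mul //.
case: m => p; rewrite /wpow !act_word_iter; apply: iter_act_conjA => // t wt /=.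
  by rewrite (mul_sylK false 1) ?nform_wf_mul.
by rewrite (mul_sylK false 1) ?nform_wf_mul // (mul_sylNK false 1).
Qed.

Lemma act_relator n m t : (k%:Z %| n)%Z -> (k%:Z %| m)%Z -> nform_wf t ->
  act_word (relator_nm n m) t = t.
Proof.
move=> kn km wt; have n0 : normexp true n = 0 by apply/dvdz_mod0P.
have Nm0 : normexp true (- m) = 0 by apply/dvdz_mod0P; rewrite rpredN.
pose t' := mulA (-1) (mulC (- m) (mulA 1 t)).
have wt' : nform_wf t' by rewrite !nform_wf_mul.
have ba_t' : act_word (wpow [:: gb; ga] m) t' = t.
  rewrite act_pow_ba // (mul_sylK false 1) ?nform_wf_mul // mul_sylA ?nform_wf_mul //.
  by rewrite addNr (mul_syl_id (b:=true)) ?nform_wf_mul ?normexp0 // (mul_sylNK false 1).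
rewrite /relator_nm act_word_cat -{1}ba_t' act_winvK // act_pow_ab // mul_syl_id //.
by rewrite /t' (mul_syl_id (b:=true)) ?nform_wf_mul // (mul_sylNK false 1).
Qed.

Lemma pres_eq_act n m u v : (k%:Z %| n)%Z -> (k%:Z %| m)%Z ->
  pres_eq [:: relator_nm n m] u v ->
  forall t, nform_wf t -> act_word u t = act_word v t.
Proof.
move=> kn km; elim=> {u v} //=.
- by move=> u v _ IH t wt; rewrite IH.
- by move=> u v w _ IH1 _ IH2 t wt; rewrite IH1 // IH2.
- move=> u v l t wt; rewrite !act_word_cat /=.
  by rewrite act_letterK // nform_wf_act.
- move=> u v r [<-|[]] t wt.
  rewrite act_word_cat [act_word (_ ++ v) _]act_word_cat act_relator ?act_word_cat //.
  exact: nform_wf_act.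
Qed.

Lemma normexpC1 : normexp true 1 = 1.
Proof. by rewrite /= modz_small //; apply/andP; split => //; rewrite ltz_nat. Qed.

Lemma normexpCN1_neq0 : normexp true (-1) != 0.
Proof.
by apply/eqP => /dvdz_mod0P; rewrite rpredN dvdz1 /= => /eqP k1; move: k_gt1; rewrite k1.
Qed.

(** The basis x_false = a, x_true = a b a b^-1 a^-1 acts as A, resp. C A C^-1. *)
Definition basis_word (j : bool) : word bool :=
  if j then [:: ga; gb; ga; (true, true); (false, true)] else [:: ga].

Definition letter_sign (l : letter bool) : int := if l.2 then -1 else 1.

Lemma letter_sign_pm1 l : letter_sign l = 1 \/ letter_sign l = -1.
Proof. by rewrite /letter_sign; case: ifP; [right | left]. Qed.

Lemma letter_sign_linv l : letter_sign (linv l) = - letter_sign l.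
Proof. by case: l => ? []; rewrite /letter_sign /= ?opprK. Qed.

Definition basis_act (l : letter bool) (s : nform) : nform :=
  if l.1 then mulC 1 (mulA (letter_sign l) (mulC (-1) s)) else mulA (letter_sign l) s.

Lemma act_basis_letter l s :
  nform_wf s -> act_word (wsubst basis_word [:: l]) s = basis_act l s.
Proof.
move=> ws; case: l => [[] []]; rewrite /= /winv /= /linv /=.
- by rewrite (mul_sylK false 1) ?nform_wf_mul // (mul_sylK false 1) ?nform_wf_mul.
- by rewrite (mul_sylK false 1) ?nform_wf_mul // (mul_sylK false 1) ?nform_wf_mul.
- by [].
- by [].
Qed.

Definition starts_with_A (e : int) (s : nform) :=
  exists i r, s = (false, i) :: r /\ 0 < i * e.

Definition pingpong_set (l : letter bool) (s : nform) :=
  if l.1 then exists r, s = (true, 1) :: r /\ starts_with_A (letter_sign l) r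
  else starts_with_A (letter_sign l) s.

Lemma starts_with_A_mul e s : (e = 1 \/ e = -1) ->
  ~ starts_with_A (- e) s -> starts_with_A e (mulA e s).
Proof.
move=> e1 hs; case: s hs => [|[[] i] r] hs.
- by case: e1 => -> /=; [exists 1, [::] | exists (-1), [::]].
- by case: e1 => -> /=; [exists 1, ((true, i) :: r) | exists (-1), ((true, i) :: r)].
have ie_ge0 : 0 <= i * e.
  by rewrite leNgt; apply/negP => ie; apply: hs; exists i, r; rewrite mulrN oppr_gt0.
have ie_gt0 : 0 < (i + e) * e by move: ie_ge0; case: e1 => ->; lia.
rewrite /= /cons_syl /=; case: eqP => [ie0|_]; last by exists (i + e), r.
by move: ie_gt0; rewrite ie0 mul0r ltxx.
Qed.

Lemma mulCN1_not_starts_with_A e s : nform_wf s ->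
    ~ (exists r, s = (true, 1) :: r /\ starts_with_A (- e) r) ->
  ~ starts_with_A (- e) (mulC (-1) s).
Proof.
move=> ws hs; have cons_C t : ~ starts_with_A (- e) (cons_syl true (-1) t).
  by rewrite /cons_syl (negbTE normexpCN1_neq0) => -[i [r []]].
case: s ws hs => [|[[] j] r] /= ws hs; [exact: cons_C | | exact: cons_C].
case/and4P: ws => nj j0 _ _.
have j_ge0 : 0 <= j by rewrite -(eqP nj) modz_ge0 //; case: (k) k_gt1.
have j_ltk : j < k%:Z by rewrite -(eqP nj) ltz_pmod // ltz_nat; case: (k) k_gt1.
rewrite /cons_syl /= modz_small; last by apply/andP; split; lia.
case: eqP => [j1|_]; last by move=> [i [r' []]].
by move=> hr; apply: hs; exists r; have -> : j = 1 by lia.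
Qed.

Lemma pingpong_step l s :
  nform_wf s -> ~ pingpong_set (linv l) s -> pingpong_set l (basis_act l s).
Proof.
rewrite /pingpong_set /basis_act letter_sign_linv /=.
case: ifP => _ ws hs; last exact: starts_with_A_mul (letter_sign_pm1 l) hs.
have [i [r [-> ir]]] :=
  starts_with_A_mul (letter_sign_pm1 l) (mulCN1_not_starts_with_A ws hs).
by exists ((false, i) :: r); split; [rewrite /= /cons_syl normexpC1 | exists i, r].
Qed.

Lemma pingpong_set_inj l1 l2 s : pingpong_set l1 s -> pingpong_set l2 s -> l1 = l2.
Proof.
case: l1 => [[] []]; case: l2 => [[] []] //=;
rewrite /pingpong_set /starts_with_A /letter_sign /= => h1 h2; exfalso;
repeat match goal with
  | H : exists _, _ |- _ => destruct H
  | H : _ /\ _ |- _ => destruct H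
  end; subst;
repeat match goal with H : (_ :: _) = (_ :: _) |- _ => case: H => *; subst end;
lia.
Qed.

Lemma pingpong_set_nil l : ~ pingpong_set l [::].
Proof. by case: l => [[] []] /= => -[x [y []]]. Qed.

Definition eval_basis (w : word bool) : nform := act_word (wsubst basis_word w) [::].

Lemma nform_wf_eval_basis w : nform_wf (eval_basis w).
Proof. exact: nform_wf_act. Qed.

Lemma eval_basis_cons l w : eval_basis (l :: w) = basis_act l (eval_basis w).
Proof.
rewrite -act_basis_letter ?nform_wf_eval_basis // /eval_basis -act_word_cat.
by rewrite /wsubst /= cats0.
Qed.

Lemma pingpong_eval_basis l w : reduced (l :: w) -> pingpong_set l (eval_basis (l :: w)).
Proof.
elim: w l => [|l' w IH] l; rewrite eval_basis_cons.
  by move=> _; apply: pingpong_step; [exact: nform_wf_eval_basis | exact: pingpong_set_nil].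
case=> ll' /IH hs; apply: pingpong_step; first exact: nform_wf_eval_basis.
by move=> /(pingpong_set_inj hs) ll'_eq; apply: ll'; rewrite ll'_eq /linv /= negbK.
Qed.

End FreeProductZZk.

Theorem mainTheorem7 (n m : int) :
  2 <= `|gcdz n m| -> big_presented [:: relator_nm n m].
Proof.
move=> gcd_ge2; pose k := gcdn `|n|%N `|m|%N.
have gcdE : gcdz n m = k%:Z by [].
have k_gt1 : (1 < k)%N by move: gcd_ge2; rewrite gcdE; lia.
have kn : (k%:Z %| n)%Z by rewrite -gcdE dvdz_gcdl.
have km : (k%:Z %| m)%Z by rewrite -gcdE dvdz_gcdr.
exists bool, basis_word, false, true; split => // -[//|l w] _ red_w trivial_w.
apply: (pingpong_set_nil (l := l)).
have := pres_eq_act kn km trivial_w (t := [::]) isT.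
by move=> /= <-; exact: pingpong_eval_basis.
Qed.
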